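(* For every $\mathsf{T_{z}S}$-closed semigroup $X$, its center $Z(X)$ is chain-finite.
   Context: $\mathsf{T_{z}S}$ is the class of Hausdorff zero-dimensional topological semigroups. A semigroup $X$ is $\mathsf{T_{z}S}$-closed if for every isomorphic topological embedding of $X$ (discrete topology) into some $Y\in\mathsf{T_{z}S}$ the image is closed in $Y$. $Z(X)=\{z\in X:\forall x\in X\ (xz=zx)\}$. A subset $C$ is a chain if $xy\in\{x,y\}$ for $x,y\in C$; a semigroup is chain-finite if it contains no infinite chain. *)

From HB Require Import structures.
From mathcomp Require Import all_boot all_order.
From mathcomp Require Import all_classical all_reals all_analysis.
Set Implicit Arguments. Unset Strict Implicit. Unset Printing Implicit Defensive.
Local Open Scope classical_set_scope.

Definition semigroup_op (X : Type) (mul : X -> X -> X) :=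
  forall x y z, mul x (mul y z) = mul (mul x y) z.

Definition zero_dim_space (Y : topologicalType) :=
  forall (y : Y) (U : set Y), open U -> U y ->
    exists V : set Y, [/\ clopen V, V y & V `<=` U].

Definition TzS_semigroup (Y : topologicalType) (mulY : Y -> Y -> Y) :=
  [/\ semigroup_op mulY,
      continuous (fun p : Y * Y => mulY p.1 p.2),
      hausdorff_space Y
    & zero_dim_space Y].

(* h is an isomorphic topological embedding of the semigroup X, carrying
   the discrete topology, into Y: an injective homomorphism which is a
   homeomorphism onto its image, i.e. whose image is a discrete subspace. *)
Definition discrete_iso_embedding (X : Type) (mulX : X -> X -> X)
  (Y : topologicalType) (mulY : Y -> Y -> Y) (h : X -> Y) :=
  [/\ injective h,
      forall x x', h (mulX x x') = mulY (h x) (h x')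
    & forall x, exists U : set Y, [/\ open U, U (h x) &
        forall x', U (h x') -> x' = x]].

Definition TzS_closed (X : Type) (mulX : X -> X -> X) :=
  forall (Y : topologicalType) (mulY : Y -> Y -> Y) (h : X -> Y),
    TzS_semigroup mulY -> discrete_iso_embedding mulX mulY h ->
    closed (range h).

Definition sg_center (X : Type) (mulX : X -> X -> X) : set X :=
  [set z | forall x, mulX x z = mulX z x].

Definition is_chain (X : Type) (mulX : X -> X -> X) (C : set X) :=
  forall x y, C x -> C y -> mulX x y = x \/ mulX x y = y.

Definition chain_finite (X : Type) (mulX : X -> X -> X) (A : set X) :=
  forall C : set X, C `<=` A -> is_chain mulX C -> finite_set C.

From HB Require Import structures.
From mathcomp Require Import all_boot all_order.
From mathcomp Require Import all_classical all_reals all_analysis.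
Set Implicit Arguments. Unset Strict Implicit. Unset Printing Implicit Defensive.
Local Open Scope classical_set_scope.

(* Suppose Z(X) contains an infinite chain, enumerated injectively as
   e : nat -> X: the e n are central idempotents, any two of them comparable.
   Fix a free ultrafilter U on nat.  We adjoin to X^1 = X + {1} a new
   idempotent eps, the U-limit of the e n: the semigroup Ext consists of the
   formal products a * eps^b (a in X^1, b in {0, 1}), two of them being
   identified when their values at eps := e k agree for U-almost all k.
   The points of X^1 are isolated in Ext, while a limit point a * eps has the
   basic neighbourhoods {a * eps} u {a * e m | m in A}, A in U.  We show that
   multiplication is continuous, that Ext is Hausdorff (as U is an
   ultrafilter) and zero-dimensional (suitable basic neighbourhoods are
   clopen), and that X embeds in Ext as a discrete subsemigroup whose closure
   contains eps, which is not in X because U is free.  So X is not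
   T_zS-closed. *)

Record free_ultrafilter := FreeUltrafilter {
  uf_sets : set_system nat;
  uf_ultra : UltraFilter uf_sets;
  uf_free : forall n, ~ uf_sets [set n]
}.

Definition uf_mem (U : free_ultrafilter) : set nat -> Prop := uf_sets U.
Coercion uf_mem : free_ultrafilter >-> Funclass.
Global Instance uf_mem_ultra (U : free_ultrafilter) : UltraFilter (uf_mem U) :=
  uf_ultra U.

(* Any ultrafilter refining the Frechet filter is free. *)
Lemma free_ultrafilter_inhabited : inhabited free_ultrafilter.
Proof.
have [G [GU sG]] := ultraFilterLemma eventually_filter.
constructor; apply: (@FreeUltrafilter G GU) => n Gn.
have Ggt : G [set k | (n < k)%N] by apply: sG; exists n.+1.
apply: (filter_not_empty G); apply: filterS (filterI Gn Ggt).
by move=> k [/= -> ]; rewrite ltnn.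
Qed.

Lemma infinite_set_enum (T : Type) (C : set T) :
  infinite_set C -> exists e : nat -> T, injective e /\ forall n, C (e n).
Proof.
move=> /infiniteP/card_leP [f].
have [g _ ginj] := (injfunPex).1 (squash f).
exists (fun n => val (g (exist _ n (mem_set I)))); split => [n m|n].
  by move=> /val_inj /ginj h; case: (h (mem_set I) (mem_set I)).
by apply: set_mem; exact: valP.
Qed.

Section ChainExtension.
Variables (X : Type) (mul : X -> X -> X) (e : nat -> X) (U : free_ultrafilter).

(* Multiplication of X^1, the semigroup X with an identity None adjoined. *)
Definition mulU (a b : option X) : option X :=
  match a, b with
  | None, _ => b
  | Some x, None => Some x
  | Some x, Some y => Some (mul x y)
  end.
Local Notation "a ** b" := (mulU a b) (at level 40, left associativity).

Definition E (k : nat) : option X := Some (e k).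
Arguments E : simpl never.

(* A formal expression (a, b) stands for a * eps^b, where eps is a new
   idempotent playing the role of the U-limit of the chain e. *)
Definition formal := (option X * bool)%type.

Definition mulF (u v : formal) : formal := (u.1 ** v.1, u.2 || v.2).

(* The value of a formal expression when eps is specialised to e k. *)
Definition eval (u : formal) (k : nat) : option X :=
  if u.2 then u.1 ** E k else u.1.

Definition ueq (u v : formal) : Prop := U [set k | eval u k = eval v k].

(* U setT, stated once so that it can be used without instance search. *)
Lemma U_setT : U setT.
Proof. exact: filterT. Qed.

Lemma ueq_refl u : ueq u u.
Proof. exact: filterS U_setT. Qed.

Lemma ueq_sym u v : ueq u v -> ueq v u.
Proof. by apply: filterS => k /= ->. Qed.

Lemma ueq_trans u v w : ueq u v -> ueq v w -> ueq u w.
Proof. by move=> uv vw; apply: filterS (filterI uv vw) => k [/= -> ->]. Qed.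

(* The extension Ext: the quotient of the formal expressions by ueq,
   represented by the set of equivalence classes. *)
Definition Ext := {R : set formal | exists u, R = ueq u}.

Definition cls (u : formal) : Ext := exist _ (ueq u) (ex_intro _ u erefl).

Definition rep (y : Ext) : formal := projT1 (cid (proj2_sig y)).

Lemma cls_rep y : cls (rep y) = y.
Proof.
rewrite /rep; case: (cid _) => u hu /=; case: y hu => R hR /= hu.
by apply: eq_exist; rewrite hu.
Qed.

Lemma cls_eq u v : cls u = cls v <-> ueq u v.
Proof.
split => [/(congr1 (@proj1_sig _ _)) /= uv|uv].
  by have := ueq_refl v; rewrite -uv.
apply: eq_exist; apply/funext => w; apply/propext.
by split; [apply: ueq_trans (ueq_sym uv) | apply: ueq_trans uv].
Qed.

Lemma cls_surj y : exists u, y = cls u.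
Proof. by exists (rep y); rewrite cls_rep. Qed.

Definition mulExt (y z : Ext) : Ext := cls (mulF (rep y) (rep z)).

Definition pt (x : option X) : Ext := cls (x, false).
Definition lpt (a : option X) : Ext := cls (a, true).

Definition inX1 (y : Ext) : Prop := exists x, y = pt x.

Definition coef (y : Ext) : option X := (rep y).1.

Lemma lpt_coef y : ~ inX1 y -> y = lpt (coef y).
Proof.
move=> yX; rewrite /coef; move: (cls_rep y); case: (rep y) => a [] //= ya.
by case: yX; exists a.
Qed.

Lemma pt_inj : injective pt.
Proof.
move=> x x' /cls_eq xx'; apply: contrapT => ne.
by apply: (filter_not_empty U); apply: filterS xx'.
Qed.

Definition basic (A : set nat) (y : Ext) : set Ext :=
  [set z | z = y \/ (~ inX1 y /\ exists2 m, A m & z = pt (coef y ** E m))].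

Lemma basic_self A y : basic A y y.
Proof. by left. Qed.

Lemma basic_mono A B y : A `<=` B -> basic A y `<=` basic B y.
Proof. by move=> AB z [->|[yX [m /AB Bm ->]]]; [left|right; split => //; exists m]. Qed.

Lemma basic_pt A x z : basic A (pt x) z -> z = pt x.
Proof. by case=> // -[[]]; exists x. Qed.

Definition ext_open (O : set Ext) : Prop :=
  forall y, O y -> ~ inX1 y -> exists2 A, U A & basic A y `<=` O.

Lemma ext_openT : ext_open setT.
Proof. by move=> y _ _; exists setT => //; exact: U_setT. Qed.

Lemma ext_openI : setI_closed ext_open.
Proof.
move=> O1 O2 o1 o2 y [y1 y2] yX.
have [A1 UA1 sA1] := o1 y y1 yX; have [A2 UA2 sA2] := o2 y y2 yX.
exists (A1 `&` A2); first exact: filterI.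
by move=> z hz; split; [apply: sA1 | apply: sA2]; apply: basic_mono hz => k [].
Qed.

Lemma ext_open_bigU (I : Type) (f : I -> set Ext) :
  (forall i, ext_open (f i)) -> ext_open (\bigcup_i f i).
Proof.
move=> fo y [i _ fiy] yX; have [A UA sA] := fo i y fiy yX.
by exists A => // z /sA fiz; exists i.
Qed.

Lemma ext_open_basic A y : U A -> ext_open (basic A y).
Proof.
move=> UA z [->|[_ [m _ ->]]] zX; first by exists A.
by case: zX; eexists.
Qed.

HB.instance Definition _ := gen_eqMixin Ext.
HB.instance Definition _ := gen_choiceMixin Ext.
HB.instance Definition _ :=
  isOpenTopological.Build Ext ext_openT ext_openI ext_open_bigU.

Lemma nbhs_ExtP (y : Ext) (W : set Ext) :
  nbhs y W <-> exists2 A, U A & basic A y `<=` W.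
Proof.
split => [[V [Vo Vy sVW]]|[A UA sAW]].
  have [[x yx]|yX] := pselect (inX1 y).
    exists setT; first exact: U_setT.
    by move=> z; rewrite yx => /basic_pt ->; apply: sVW; rewrite -yx.
  by have [A UA sA] := Vo y Vy yX; exists A => // z /sA /sVW.
by exists (basic A y); split => //; [exact: ext_open_basic | exact: basic_self].
Qed.

Lemma basic_nbhs (y : Ext) A : U A -> nbhs y (basic A y).
Proof. by move=> UA; apply/nbhs_ExtP; exists A. Qed.

Hypothesis mul_assoc : semigroup_op mul.
Hypothesis e_central : forall n x, mul x (e n) = mul (e n) x.
Hypothesis e_chain : forall n m, mul (e n) (e m) = e n \/ mul (e n) (e m) = e m.

Lemma mulUA : associative mulU.
Proof.
by case=> [x|] // [y|] // [z|] //=; rewrite mul_assoc.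
Qed.

Lemma E_central a k : a ** E k = E k ** a.
Proof. by case: a => [x|] //=; rewrite e_central. Qed.

Lemma E_chain m n : E m ** E n = E m \/ E m ** E n = E n.
Proof. by rewrite /E /=; case: (e_chain m n) => ->; [left|right]. Qed.

Lemma E_idem k : E k ** E k = E k.
Proof. by case: (E_chain k k). Qed.

Lemma mulU_E_swap a b k : a ** E k ** b = a ** b ** E k.
Proof. by rewrite -mulUA -(E_central b) mulUA. Qed.

Lemma absorb_l a m n : E m ** E n = E m -> a ** E n ** E m = a ** E m.
Proof. by move=> mn; rewrite -mulUA E_central mn. Qed.

Lemma absorb_r a m n : E m ** E n = E m -> a ** E m ** E n = a ** E m.
Proof. by move=> mn; rewrite -mulUA mn. Qed.

(* Evaluation at e k is multiplicative, since e k is a central idempotent;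
   hence ueq is a congruence and Ext is a semigroup. *)
Lemma eval_mulF u v k : eval (mulF u v) k = eval u k ** eval v k.
Proof.
case: u => a [] ; case: v => b [] //=; rewrite /eval /=.
- by rewrite mulU_E_swap mulUA -[RHS]mulUA E_idem.
- by rewrite mulU_E_swap.
- by rewrite mulUA.
Qed.

Lemma ueq_mulF u u' v v' : ueq u u' -> ueq v v' -> ueq (mulF u v) (mulF u' v').
Proof.
move=> uu' vv'; apply: filterS (filterI uu' vv') => k [/= uk vk].
by rewrite !eval_mulF uk vk.
Qed.

Lemma mulExt_cls u v : mulExt (cls u) (cls v) = cls (mulF u v).
Proof. by apply/cls_eq; apply: ueq_mulF; apply/cls_eq; exact: cls_rep. Qed.

Lemma mulExt_assoc : semigroup_op mulExt.
Proof.
move=> x y z; have [u ->] := cls_surj x; have [v ->] := cls_surj y.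
have [w ->] := cls_surj z.
by rewrite !mulExt_cls /mulF /= mulUA orbA.
Qed.

Lemma ultra_meet (M : set nat) : (forall A, U A -> exists2 m, A m & M m) -> U M.
Proof.
move=> meetM; case: (in_ultra_setVsetC M (uf_mem_ultra U)) => // UnM.
by have [m] := meetM _ UnM.
Qed.

(* Multiplying c * eps by e m either lands in X^1 or changes nothing,
   according to whether e m lies U-a.e. below or above the chain. *)
Lemma lpt_shift c m : lpt (c ** E m) = pt (c ** E m) \/ lpt (c ** E m) = lpt c.
Proof.
case: (in_ultra_setVsetC [set k | E k ** E m = E m] (uf_mem_ultra U)) => below.
  left; apply/cls_eq; apply: filterS below => k km.
  by rewrite /eval /= -mulUA E_central km.
right; apply/cls_eq; apply: filterS below => k km; rewrite /eval /= -mulUA E_central.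
by case: (E_chain k m) => [-> // | km']; case: km.
Qed.

Lemma lpt_basic_shift d A : U A -> exists2 B, U B & forall m, B m ->
  basic A (lpt d) (pt (d ** E m)) /\ basic A (lpt d) (lpt (d ** E m)).
Proof.
move=> UA.
suff [B UB dB] : exists2 B, U B & forall m, B m -> basic A (lpt d) (pt (d ** E m)).
  exists B => // m Bm; split; first exact: dB.
  by case: (lpt_shift d m) => ->; [apply: dB | apply: basic_self].
have [[z dz]|dX] := pselect (inX1 (lpt d)).
  have /cls_eq dz_ae := dz.
  exists [set k | eval (d, true) k = eval (z, false) k] => // m dm.
  by left; rewrite dz; congr cls; congr pair; exact: dm.
have /cls_eq dc_ae := lpt_coef dX.
exists (A `&` [set k | eval (d, true) k = eval (coef (lpt d), true) k]).
  exact: filterI.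
by move=> m [Am dm]; right; split => //; exists m => //; congr cls; congr pair.
Qed.

Lemma Ext_repr y : exists a b, y = cls (a, b) /\
  forall A z, basic A y z -> z = y \/ (b /\ exists2 m, A m & z = pt (a ** E m)).
Proof.
have [[x ->]|yX] := pselect (inX1 y).
  by exists x, false; split => // A z /basic_pt ->; left.
exists (coef y), true; split; first exact: lpt_coef.
by move=> A z [->|[_ yz]]; [left|right].
Qed.

Lemma mulExt_basic y1 y2 A : U A -> exists2 B, U B &
  forall u v, basic B y1 u -> basic B y2 v -> basic A (mulExt y1 y2) (mulExt u v).
Proof.
move=> UA.
have [a1 [b1 [e1 H1]]] := Ext_repr y1; have [a2 [b2 [e2 H2]]] := Ext_repr y2.
have y12 : mulExt y1 y2 = cls (a1 ** a2, b1 || b2) by rewrite e1 e2 mulExt_cls.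
case hb : (b1 || b2); last first.
  exists setT; first exact: U_setT.
  move=> u v /H1 [->|[b1T _]]; last by move: hb; rewrite b1T.
  move=> /H2 [->|[b2T _]]; last by move: hb; rewrite b2T orbT.
  exact: basic_self.
have [B UB hB] := lpt_basic_shift (a1 ** a2) UA.
exists B => // u v /H1 hu /H2 hv; rewrite y12 hb.
case: hu => [->|[b1T [m Bm ->]]]; case: hv => [->|[b2T [m' Bm' ->]]].
- by rewrite -hb -y12; apply: basic_self.
- rewrite e1 mulExt_cls /mulF /= mulUA orbF.
  by case: (b1); [apply: (hB _ Bm').2 | apply: (hB _ Bm').1].
- rewrite e2 mulExt_cls /mulF /= mulU_E_swap.
  by case: (b2); [apply: (hB _ Bm).2 | apply: (hB _ Bm).1].
- rewrite mulExt_cls /mulF /= mulU_E_swap mulUA -(mulUA _ (E m')).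
  by case: (E_chain m' m) => ->; [apply: (hB _ Bm').1 | apply: (hB _ Bm).1].
Qed.

Lemma mulExt_continuous : continuous (fun p : Ext * Ext => mulExt p.1 p.2).
Proof.
move=> [y1 y2] W /nbhs_ExtP [A UA sAW].
have [B UB hB] := mulExt_basic y1 y2 UA.
exists (basic B y1, basic B y2); first by split; apply: basic_nbhs.
by move=> [u v] [/= u1 v2]; apply: sAW; apply: hB.
Qed.

Lemma lpt_eq_pt c x : (forall A, U A -> exists2 m, A m & c ** E m = x) -> lpt c = pt x.
Proof. by move=> cx; apply/cls_eq; apply: ultra_meet => A /cx [m Am cmx]; exists m. Qed.

Lemma lpt_eq_lpt c c' :
  (forall A, U A -> exists m m', [/\ A m, A m' & c ** E m = c' ** E m']) ->
  lpt c = lpt c'.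
Proof.
move=> cc'; apply/cls_eq; apply: ultra_meet => A /cc' [m [m' [Am Am' cmc'm']]].
rewrite /eval /=; case: (E_chain m m') => mm'.
  by exists m => //; rewrite -(absorb_l c' mm') -cmc'm' absorb_r // E_idem.
have m'm : E m' ** E m = E m' by rewrite E_central.
by exists m' => //; rewrite -(absorb_l c m'm) cmc'm' absorb_r // E_idem.
Qed.

Lemma pt_in_basics y x : (forall A, U A -> basic A y (pt x)) -> y = pt x.
Proof.
move=> xy; have [[x' yx']|yX] := pselect (inX1 y).
  by have := xy _ U_setT; rewrite yx' => /basic_pt ->.
rewrite (lpt_coef yX); apply: lpt_eq_pt => A /xy [xy'|[_ [m Am /pt_inj ->]]].
  by case: yX; exists x.
by exists m.
Qed.

Lemma basic_meet y z A B w : ~ inX1 y -> ~ inX1 z -> basic A y w -> basic B z w ->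
  y = z \/ exists m m', [/\ A m, B m' & coef y ** E m = coef z ** E m'].
Proof.
move=> yX zX [->|[_ [m Am ->]]] [wz|[_ [m' Bm' wz]]].
- by left.
- by case: yX; rewrite wz; eexists.
- by case: zX; rewrite -wz; eexists.
- by right; exists m, m'; split => //; apply: pt_inj.
Qed.

(* Inseparable points coincide: a point of X^1 is recognised by
   pt_in_basics, two limit points by lpt_eq_lpt. *)
Lemma Ext_hausdorff : hausdorff_space Ext.
Proof.
move=> y1 y2 y12.
have meet A : U A -> exists w, basic A y1 w /\ basic A y2 w.
  move=> UA; have [w [w1 w2]] := y12 _ _ (basic_nbhs y1 UA) (basic_nbhs y2 UA).
  by exists w.
have [[x1 y1x1]|y1X] := pselect (inX1 y1).
  rewrite y1x1 in meet *.
  by apply/esym/pt_in_basics => A /meet [w [/basic_pt ->]].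
have [[x2 y2x2]|y2X] := pselect (inX1 y2).
  rewrite y2x2 in meet *; apply: pt_in_basics => A /meet [w [w1 /basic_pt w2]].
  by rewrite -w2.
have [//|ne] := pselect (y1 = y2); rewrite (lpt_coef y1X) (lpt_coef y2X).
apply: lpt_eq_lpt => A /meet [w [w1 w2]].
by case: (basic_meet y1X y2X w1 w2) => // /ne.
Qed.

(* The indices m with e m above the U-limit of the chain. *)
Definition upper : set nat := [set m | U [set k | E k ** E m = E k]].

Lemma absorb_transfer a c j k :
  a ** E j = c ** E j -> E k ** E j = E k -> a ** E k = c ** E k.
Proof. by move=> acj kj; rewrite -(absorb_l a kj) acj absorb_l. Qed.

Lemma chain_cancel a c m m' : a ** E m = c ** E m' ->
  a ** E m' = c ** E m' \/ (a ** E m = c ** E m /\ c ** E m' = c ** E m).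
Proof.
move=> acmm'; case: (E_chain m m') => mm'.
  right; have cam : c ** E m = a ** E m.
    by rewrite -(absorb_l c mm') -acmm' absorb_r // E_idem.
  by split; [rewrite cam | rewrite -acmm' cam].
have m'm : E m' ** E m = E m' by rewrite E_central.
by left; rewrite -(absorb_l a m'm) acmm' absorb_r // E_idem.
Qed.

Section Separation.
Variables (a c : option X) (A : set nat).
Hypothesis ac_apart : ~ U [set j | a ** E j = c ** E j].
Hypothesis ac_meet :
  forall B, U B -> exists m m', [/\ A m, B m' & a ** E m = c ** E m'].

Lemma apart_large : U (~` [set j | a ** E j = c ** E j]).
Proof. by case: (in_ultra_setVsetC [set j | a ** E j = c ** E j] (uf_mem_ultra U)). Qed.

Lemma apart_upper : ~ A `<=` upper.
Proof.
move=> Aup; have [m [m' [Am m'D acmm']]] := ac_meet apart_large.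
case: (chain_cancel acmm') => [//|[acm _]]; apply: ac_apart.
by apply: filterS (Aup _ Am) => k; exact: absorb_transfer acm.
Qed.

Lemma apart_lower : U (~` upper) -> inX1 (lpt c).
Proof.
move=> Ulow.
have [k0 [k0low k0D]] := filter_ex (filterI Ulow apart_large).
have below : U [set k | E k ** E k0 = E k0].
  case: (in_ultra_setVsetC [set k | E k ** E k0 = E k] (uf_mem_ultra U)) => // up.
  by apply: filterS up => k; case: (E_chain k k0).
exists (c ** E k0); apply: lpt_eq_pt => B0 UB0.
have [m [m' [Am [[B0m' m'D] m'k0] acmm']]] :=
  ac_meet (filterI (filterI UB0 apart_large) below).
case: (chain_cancel acmm') => [//|[acm cm'm]].
case: (E_chain k0 m) => k0m; first by case: k0D; exact: absorb_transfer acm k0m.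
have k0m' : E k0 ** E m' = E k0 by rewrite E_central.
have mk0 : E m ** E k0 = E m by rewrite E_central.
by exists m' => //; rewrite -(absorb_l c k0m') cm'm absorb_r.
Qed.

End Separation.

Lemma basic_closed_sep y A z : U A -> (U upper -> A `<=` upper) ->
  ~ inX1 z -> ~ basic A y z ->
  exists2 B, U B & forall w, basic B z w -> ~ basic A y w.
Proof.
move=> UA adm zX nyz; apply: contrapT => nosep.
have meet B : U B -> exists w, basic B z w /\ basic A y w.
  move=> UB; apply: contrapT => nw; apply: nosep; exists B => // w w1 w2.
  by apply: nw; exists w.
have [[x yx]|yX] := pselect (inX1 y).
  apply: zX; exists x; apply: pt_in_basics => B /meet [w [zw]].
  by rewrite yx => /basic_pt wx; rewrite -wx.
have ac_meet B : U B ->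
    exists m m', [/\ A m, B m' & coef y ** E m = coef z ** E m'].
  move=> UB; have [w [zw yw]] := meet _ UB.
  case: (basic_meet yX zX yw zw) => // yz.
  by case: nyz; rewrite -yz; exact: basic_self.
have ac_apart : ~ U [set j | coef y ** E j = coef z ** E j].
  move=> yz; apply: nyz; suff -> : z = y by exact: basic_self.
  by rewrite (lpt_coef yX) (lpt_coef zX); apply/cls_eq/ueq_sym.
case: (in_ultra_setVsetC upper (uf_mem_ultra U)) => [Uup|Ulow].
  exact: (apart_upper ac_apart ac_meet (adm Uup)).
by have := apart_lower ac_apart ac_meet Ulow; rewrite -(lpt_coef zX).
Qed.

Lemma basic_clopen y A : U A -> (U upper -> A `<=` upper) -> clopen (basic A y).
Proof.
move=> UA adm; split; first exact: ext_open_basic.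
rewrite -openC; change (ext_open (~` basic A y)) => z zn zX.
exact: basic_closed_sep.
Qed.

(* Shrinking A to A `&` upper when upper is in U makes it admissible. *)
Lemma Ext_zero_dim : zero_dim_space Ext.
Proof.
move=> y W Wo Wy; have /nbhs_ExtP [A UA sAW] : nbhs y W by exists W; split.
have [A' [UA' adm sA'A]] :
    exists A', [/\ U A', U upper -> A' `<=` upper & A' `<=` A].
  have [Uup|nUup] := pselect (U upper).
    exists (A `&` upper); split => [|_|]; first exact: filterI.
    - by move=> k [].
    - by move=> k [].
  by exists A; split => // /nUup.
exists (basic A' y); split; [exact: basic_clopen | exact: basic_self |].
exact: subset_trans (basic_mono sA'A) sAW.
Qed.

Lemma Ext_TzS : TzS_semigroup mulExt.
Proof.
split; [exact: mulExt_assoc | exact: mulExt_continuous | exact: Ext_hausdorff |].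
exact: Ext_zero_dim.
Qed.

Lemma pt_embedding : discrete_iso_embedding mul mulExt (fun x => pt (Some x)).
Proof.
split => [x x' /pt_inj [] //|x x'|x]; first by rewrite mulExt_cls.
exists (basic setT (pt (Some x))); split.
- exact: ext_open_basic U_setT.
- exact: basic_self.
- by move=> x' /basic_pt /pt_inj [].
Qed.

Hypothesis e_inj : injective e.

(* The limit eps of the chain is not a point of X^1, as U is free. *)
Lemma lpt_None_notin : ~ inX1 (lpt None).
Proof.
move=> [x /cls_eq epsx]; have [k0 k0x] := filter_ex epsx.
apply: (@uf_free U k0); apply: filterS epsx => k; rewrite /eval /= => kx.
by move: k0x; rewrite /eval /= -kx /E => -[/e_inj].
Qed.

(* ... but it lies in the closure of X. *)
Lemma pt_range_not_closed : ~ closed (range (fun x => pt (Some x))).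
Proof.
move=> cl; apply: lpt_None_notin.
have [x _ <-] : range (fun x => pt (Some x)) (lpt None).
  apply: cl => W /nbhs_ExtP [A UA sAW]; have [m Am] := filter_ex UA.
  have [x mx] : exists x, coef (lpt None) ** E m = Some x.
    by case: (coef _) => [?|]; eexists.
  exists (pt (Some x)); split; first by exists x.
  apply: sAW; right; split; first exact: lpt_None_notin.
  by exists m => //; rewrite mx.
by exists (Some x).
Qed.

Lemma not_TzS_closed : ~ TzS_closed mul.
Proof. by move=> cl; apply/pt_range_not_closed/(cl _ _ _ Ext_TzS pt_embedding). Qed.

End ChainExtension.

(* An infinite chain in Z(X) would enumerate as such an e. *)
Theorem lemma5p1 (X : Type) (mulX : X -> X -> X) :
  semigroup_op mulX -> TzS_closed mulX -> chain_finite mulX (sg_center mulX).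
Proof.
move=> assoc closedX C C_central C_chain; apply: contrapT => C_infinite.
have [e [e_inj eC]] := infinite_set_enum C_infinite.
have [U] := free_ultrafilter_inhabited.
apply: (not_TzS_closed U assoc _ _ e_inj closedX) => [n x|n m].
- exact: C_central (eC n) x.
- exact: C_chain (eC n) (eC m).
Qed.
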